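(* Under the standing assumptions, suppose moreover that $R$ is a Hirata separable extension of $R^\beta$. Then for all $g,h\in\mathcal G$ with $d(g)=r(h)$ one has $J_hJ_g=J_{gh}$ (where $J_hJ_g$ denotes the additive subgroup generated by all products $ab$ with $a\in J_h$, $b\in J_g$). In particular, $J_{g^{-1}}J_g=V_{E_g}(R)=\{r\in E_g: rx=xr\ \forall x\in R\}$ and $J_g\neq\{0\}$ for every $g\in\mathcal G$.
   Context: All rings and algebras are associative and unital. A groupoid is a nonempty set $\mathcal G$ with a partially defined associative multiplication in which every $g$ has an inverse $g^{-1}$, a left identity $r(g)=gg^{-1}$ and a right identity $d(g)=g^{-1}g$; $gh$ is defined iff $d(g)=r(h)$; $\mathcal G_0$ is the set of identities. Standing assumptions: $K$ commutative ring, $R$ a $K$-algebra, $\mathcal G$ a finite groupoid, $\beta=(\{E_g\},\{\beta_g\})$ a unital action of $\mathcal G$ on $R$: $E_g=E_{r(g)}$ is an ideal of $R$, unital with identity $1_g$ (so $1_{g^{-1}}=1_{d(g)}$), $\beta_g:E_{g^{-1}}\to E_g$ a $K$-algebra isomorphism, $\beta_e=\mathrm{id}_{E_e}$ for $e\in\mathcal G_0$, $\beta_g\beta_h(x)=\beta_{gh}(x)$ whenever $d(g)=r(h)$, $x\in E_{h^{-1}}$; $R=\bigoplus_{e\in\mathcal G_0}E_e$; and $R$ is a $\beta$-Galois extension of $R^\beta=\{r\in R:\beta_g(r1_{g^{-1}})=r1_g\ \forall g\in\mathcal G\}$: there exist $x_i,y_i\in R$ ($1\le i\le m$) with $\sum_i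 x_i\beta_g(y_i1_{g^{-1}})=1_g$ if $g\in\mathcal G_0$ and $=0$ otherwise. For $g\in\mathcal G$, $J_g=\{r\in E_g: r\beta_g(x1_{g^{-1}})=xr\ \forall x\in R\}$. A ring extension $R\supseteq S$ is Hirata separable if $R\otimes_S R$ is isomorphic, as an $R$-$R$-bimodule, to a direct summand of a finite direct sum of copies of $R$. *)

From HB Require Import structures.
From mathcomp Require Import all_boot all_order all_algebra.
Set Implicit Arguments. Unset Strict Implicit. Unset Printing Implicit Defensive.
Import GRing.Theory.
Local Open Scope ring_scope.

(* Finite groupoids.  The multiplication is a total function, but it is *)
(* only ever used (and only constrained) on composable pairs, i.e. when  *)
(* d(g) = r(h); this models the partially defined multiplication.        *)
Record groupoid := Groupoid {
  gcar :> finType;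
  gmul : gcar -> gcar -> gcar;
  ginv : gcar -> gcar }.

Definition gr (G : groupoid) (g : G) : G := gmul g (ginv g).
Definition gd (G : groupoid) (g : G) : G := gmul (ginv g) g.

Definition is_groupoid (G : groupoid) : Prop :=
  [/\ (0 < #|G|)%N,
      (forall g : G, ginv (ginv g) = g),
      (forall g h k : G, gd g = gr h -> gd h = gr k ->
          gmul (gmul g h) k = gmul g (gmul h k)),
      (forall g h : G, gd g = gr h ->
          gd (gmul g h) = gd h /\ gr (gmul g h) = gr g) &
      (forall g : G, gmul g (gd g) = g /\ gmul (gr g) g = g)].

Definition gid (G : groupoid) (e : G) : bool := gd e == e.

Definition is_K_algebra (K : comPzRingType) (R : pzRingType)
    (sc : K -> R -> R) : Prop :=
  [/\ (forall k x y, sc k (x + y) = sc k x + sc k y),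
      (forall k l x, sc (k + l) x = sc k x + sc l x),
      (forall k l x, sc (k * l) x = sc k (sc l x)),
      (forall x, sc 1 x = x) &
      (forall k x y, sc k (x * y) = sc k x * y /\ sc k (x * y) = x * sc k y)].

Definition is_ideal (R : pzRingType) (I : R -> Prop) : Prop :=
  [/\ I 0, (forall x y, I x -> I y -> I (x + y)), (forall x, I x -> I (- x)) &
      (forall a x, I x -> I (a * x) /\ I (x * a))].

Definition unital_action (K : comPzRingType) (R : pzRingType)
    (sc : K -> R -> R) (G : groupoid)
    (E : G -> R -> Prop) (one : G -> R) (beta : G -> R -> R) : Prop :=
  (forall g x, E g x <-> E (gr g) x) /\
  (forall g, is_ideal (E g) /\ E g (one g) /\
             (forall x, E g x -> one g * x = x /\ x * one g = x)) /\
  (forall g,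
     (forall x, E (ginv g) x -> E g (beta g x)) /\
     (forall x y, E (ginv g) x -> E (ginv g) y ->
        beta g (x + y) = beta g x + beta g y /\
        beta g (x * y) = beta g x * beta g y) /\
     (forall k x, E (ginv g) x -> beta g (sc k x) = sc k (beta g x)) /\
     (forall x y, E (ginv g) x -> E (ginv g) y -> beta g x = beta g y -> x = y) /\
     (forall y, E g y -> exists2 x, E (ginv g) x & beta g x = y)) /\
  (forall e, gid e -> forall x, E e x -> beta e x = x) /\
  (forall g h x, gd g = gr h -> E (ginv h) x ->
     beta g (beta h x) = beta (gmul g h) x) /\
  (forall x : R, exists f : G -> R,
     (forall e, gid e -> E e (f e)) /\ x = \sum_(e | gid e) f e) /\
  (forall f : G -> R, (forall e, gid e -> E e (f e)) ->
     \sum_(e | gid e) f e = 0 -> forall e, gid e -> f e = 0).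

Definition fixed_ring (R : pzRingType) (G : groupoid) (one : G -> R)
    (beta : G -> R -> R) (x : R) : Prop :=
  forall g : G, beta g (x * one (ginv g)) = x * one g.

Definition galois_ext (R : pzRingType) (G : groupoid) (one : G -> R)
    (beta : G -> R -> R) : Prop :=
  exists m (x y : 'I_m -> R), forall g : G,
    \sum_(i < m) x i * beta g (y i * one (ginv g)) = if gid g then one g else 0.

Definition Jset (R : pzRingType) (G : groupoid) (E : G -> R -> Prop)
    (one : G -> R) (beta : G -> R -> R) (g : G) (r : R) : Prop :=
  E g r /\ forall x : R, r * beta g (x * one (ginv g)) = x * r.

Definition prodgen (R : pzRingType) (A B : R -> Prop) (x : R) : Prop :=
  exists n (a b : 'I_n -> R) (z : 'I_n -> int),
    (forall i, A (a i) /\ B (b i)) /\ x = \sum_(i < n) (a i * b i) *~ z i.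

Record bimod (R : pzRingType) := Bimod {
  bm_car :> zmodType;
  bm_l : R -> bm_car -> bm_car;
  bm_r : bm_car -> R -> bm_car }.

Definition is_bimod (R : pzRingType) (M : bimod R) : Prop :=
  [/\ (forall a (m n : M), bm_l a (m + n) = bm_l a m + bm_l a n /\
                           bm_r (m + n) a = bm_r m a + bm_r n a),
      (forall a b (m : M), bm_l (a + b) m = bm_l a m + bm_l b m /\
                           bm_r m (a + b) = bm_r m a + bm_r m b),
      (forall a b (m : M), bm_l (a * b) m = bm_l a (bm_l b m) /\
                           bm_r m (a * b) = bm_r (bm_r m a) b),
      (forall m : M, bm_l 1 m = m /\ bm_r m 1 = m) &
      (forall a b (m : M), bm_l a (bm_r m b) = bm_r (bm_l a m) b)].

Definition bimod_hom (R : pzRingType) (M N : bimod R) (f : M -> N) : Prop :=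
  [/\ (forall m n, f (m + n) = f m + f n),
      (forall a m, f (bm_l a m) = bm_l a (f m)) &
      (forall a m, f (bm_r m a) = bm_r (f m) a)].

Definition sub_bimod (R : pzRingType) (M : bimod R) (P : M -> Prop) : Prop :=
  [/\ P 0, (forall m n, P m -> P n -> P (m + n)), (forall m, P m -> P (- m)) &
      (forall a m, P m -> P (bm_l a m) /\ P (bm_r m a))].

(* (M, t) is the tensor product R (x)_S R, with its R-R-bimodule structure,
   characterised by its universal property among S-balanced biadditive maps *)
Definition is_tensor (R : pzRingType) (S : R -> Prop) (M : bimod R)
    (t : R -> R -> M) : Prop :=
  is_bimod M /\
  (forall a b c, t (a + b) c = t a c + t b c /\ t a (b + c) = t a b + t a c) /\
  (forall a s b, S s -> t (a * s) b = t a (s * b)) /\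
  (forall c a b, bm_l c (t a b) = t (c * a) b /\ bm_r (t a b) c = t a (b * c)) /\
  (forall (A : zmodType) (phi : R -> R -> A),
     (forall a b c, phi (a + b) c = phi a c + phi b c /\
                    phi a (b + c) = phi a b + phi a c) ->
     (forall a s b, S s -> phi (a * s) b = phi a (s * b)) ->
     exists h : M -> A,
       ((forall m n, h (m + n) = h m + h n) /\ (forall a b, h (t a b) = phi a b)) /\
       (forall h' : M -> A, (forall m n, h' (m + n) = h' m + h' n) ->
          (forall a b, h' (t a b) = phi a b) -> forall m, h' m = h m)).

Definition rowbimod (R : pzRingType) (n : nat) : bimod R :=
  @Bimod R 'rV[R]_n (fun a v => \row_i (a * v 0 i)) (fun v b => \row_i (v 0 i * b)).

(* R is Hirata separable over S: R (x)_S R is isomorphic, as an R-R-bimodule,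
   to a direct summand of R^n for some n *)
Definition hirata_separable (R : pzRingType) (S : R -> Prop) : Prop :=
  exists (M : bimod R) (t : R -> R -> M), @is_tensor R S M t /\
  exists (n : nat) (P Q : rowbimod R n -> Prop) (f : M -> rowbimod R n),
    [/\ sub_bimod P, sub_bimod Q,
        (forall v, exists p q, [/\ P p, Q q & v = p + q]),
        (forall v, P v -> Q v -> v = 0) &
        [/\ bimod_hom f, (forall m m', f m = f m' -> m = m') &
            (forall v, P v <-> exists m, v = f m)]].

From HB Require Import structures.
From mathcomp Require Import all_boot all_order all_algebra.
Set Implicit Arguments. Unset Strict Implicit. Unset Printing Implicit Defensive.
Import GRing.Theory.
Local Open Scope ring_scope.

(* The inclusion J_h J_g <= J_gh is a direct computation.  The converse     *)
(* rests on a decomposition 1_g = sum_j w_j u_j with w_j in J_{g^-1} and    *)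
(* u_j in J_g: then x in J_gh factors as x = x 1_g = sum_j (x w_j) u_j with *)
(* x w_j in J_h.  To obtain it, write sigma_g(a) = beta_g(a 1_{g^-1}).      *)
(*  - Generic bimodule fact: a bimodule isomorphic to a direct summand of   *)
(*    R^k is spanned over R by k elements centralised by R.                 *)
(*  - Generic tensor facts: on R (x)_S R the evaluation a (x) b |-> a s(b)  *)
(*    is left linear and right s-semilinear for a suitable ring map s, and  *)
(*    dual bases for an S-valued trace give a Casimir element q with        *)
(*    q c = s(c) q.                                                         *)
(*  - The Galois coordinates are dual bases for the trace                   *)
(*    tr(r) = sum_k sigma_k(r), which takes values in R^beta.               *)
(* Expanding q over the central generators m_j and evaluating gives         *)
(* w_j = f(q)_j 1_{g^-1} and u_j = h(m_j).                                  *)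

Lemma additive_0 (A B : zmodType) (h : A -> B) :
  {morph h : x y / x + y} -> h 0 = 0.
Proof. by move=> hD; apply: (addrI (h 0)); rewrite -hD !addr0. Qed.

Lemma additive_sum (A B : zmodType) (h : A -> B) (I : Type) (r : seq I)
    (P : pred I) (F : I -> A) :
  {morph h : x y / x + y} ->
  h (\sum_(i <- r | P i) F i) = \sum_(i <- r | P i) h (F i).
Proof. by move=> hD; apply: big_morph; [exact: hD | exact: additive_0]. Qed.

Section DirectSummand.
Variables (R : pzRingType) (M : bimod R) (k : nat).
Variables (P Q : rowbimod R k -> Prop) (f : M -> rowbimod R k).
Hypotheses (subP : sub_bimod P) (subQ : sub_bimod Q).
Hypothesis PQ_span : forall v, exists p q, [/\ P p, Q q & v = p + q].
Hypothesis PQ_disj : forall v, P v -> Q v -> v = 0.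
Hypothesis f_hom : bimod_hom f.
Hypothesis f_inj : forall m m', f m = f m' -> m = m'.
Hypothesis f_im : forall v, P v <-> exists m, v = f m.

Lemma row_actlD c (v v' : rowbimod R k) :
  bm_l c (v + v') = bm_l c v + bm_l c v'.
Proof. by apply/rowP => i; rewrite !mxE mulrDr. Qed.

Lemma row_actrD c (v v' : rowbimod R k) :
  bm_r (v + v') c = bm_r v c + bm_r v' c.
Proof. by apply/rowP => i; rewrite !mxE mulrDl. Qed.

Lemma summand_component_unique (p q p' q' : rowbimod R k) :
  P p -> Q q -> P p' -> Q q' -> p + q = p' + q' -> p = p'.
Proof.
case: subP subQ => _ PD PN _ [_ QD QN _] Pp Qq Pp' Qq' Epq.
have Ediff : p - p' = q' - q.
  by apply/eqP; rewrite subr_eq (addrC _ p') addrA -Epq addrK.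
apply/eqP; rewrite -subr_eq0; apply/eqP; apply: PQ_disj.
  by apply: PD => //; apply: PN.
by rewrite Ediff; apply: QD => //; apply: QN.
Qed.

Lemma f_in_P m : P (f m).
Proof. by apply/f_im; exists m. Qed.

Lemma Q_lin_comb (c : 'I_k -> R) (v : 'I_k -> rowbimod R k) :
  (forall j, Q (v j)) -> Q (\sum_(j < k) bm_l (c j) (v j)).
Proof.
case: subQ => Q0 QD _ Qact Qv; elim/big_rec: _ => // j w _; apply: QD.
exact: (proj1 (Qact _ _ (Qv j))).
Qed.

Definition unit_row (j : 'I_k) : rowbimod R k := \row_i (i == j)%:R.

Lemma unit_row_central c j : bm_l c (unit_row j) = bm_r (unit_row j) c.
Proof.
by apply/rowP => i; rewrite !mxE; case: (i == j); rewrite ?mulr1 ?mul1r ?mulr0 ?mul0r.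
Qed.

Lemma row_coords (v : rowbimod R k) : v = \sum_(j < k) bm_l (v 0 j) (unit_row j).
Proof.
apply/rowP => i; rewrite summxE (bigD1 i) //= big1 => [|j ji].
  by rewrite !mxE eqxx mulr1 addr0.
by rewrite !mxE eq_sym (negbTE ji) mulr0.
Qed.

(* The P-components of the unit rows are the required generators: they are *)
(* central by uniqueness of the decomposition.                              *)
Lemma summand_central_basis :
  exists m : 'I_k -> M,
    (forall c j, bm_l c (m j) = bm_r (m j) c) /\
    (forall x : M, x = \sum_(j < k) bm_l (f x 0 j) (m j)).
Proof.
case: f_hom => fD fl fr.
have [mq mq_split] : exists mq : 'I_k -> M * rowbimod R k,
    forall j, Q (mq j).2 /\ unit_row j = f (mq j).1 + (mq j).2.
  apply: (@fin_all_exists _ (fun _ => (M * rowbimod R k)%type)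
    (fun j mq => Q mq.2 /\ unit_row j = f mq.1 + mq.2)) => j.
  have [p [q [Pp Qq ->]]] := PQ_span (unit_row j).
  by have [m ->] := proj1 (f_im p) Pp; exists (m, q).
exists (fun j => (mq j).1); split.
  move=> c j; apply: f_inj; rewrite fl fr; have [Qj split_j] := mq_split j.
  move: (unit_row_central c j); rewrite split_j row_actlD row_actrD.
  case: subP subQ => _ _ _ Pact [_ _ _ Qact].
  apply: summand_component_unique; by [apply: (proj1 (Pact _ _ (f_in_P _))) |
    apply: (proj1 (Qact _ _ Qj)) | apply: (proj2 (Pact _ _ (f_in_P _))) |
    apply: (proj2 (Qact _ _ Qj))].
move=> x; apply: f_inj; rewrite (additive_sum _ _ _ fD).
apply: (@summand_component_unique _ 0 _ (\sum_(j < k) bm_l (f x 0 j) (mq j).2)).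
- exact: f_in_P.
- by case: subQ.
- by rewrite -(additive_sum _ _ _ fD); apply: f_in_P.
- by apply: Q_lin_comb => j; case: (mq_split j).
rewrite addr0 {1}[f x]row_coords -big_split; apply: eq_bigr => j _.
by rewrite fl (proj2 (mq_split j)) row_actlD.
Qed.

End DirectSummand.

Section TensorProduct.
Variables (R : pzRingType) (S : R -> Prop) (M : bimod R) (t : R -> R -> M).
Hypothesis tensorM : is_tensor S t.

Lemma tensor_bimod : is_bimod M.
Proof. by case: tensorM. Qed.

Lemma tensor_addl a b c : t (a + b) c = t a c + t b c.
Proof. by case: tensorM => _ [/(_ a b c) []]. Qed.

Lemma tensor_addr a b c : t a (b + c) = t a b + t a c.
Proof. by case: tensorM => _ [/(_ a b c) []]. Qed.

Lemma tensor_balanced a s b : S s -> t (a * s) b = t a (s * b).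
Proof. by case: tensorM => _ [_ [/(_ a s b)]]. Qed.

Lemma tensor_actl c a b : bm_l c (t a b) = t (c * a) b.
Proof. by case: tensorM => _ [_ [_ [/(_ c a b) []]]]. Qed.

Lemma tensor_actr c a b : bm_r (t a b) c = t a (b * c).
Proof. by case: tensorM => _ [_ [_ [/(_ c a b) []]]]. Qed.

Lemma bimod_actlD c (m m' : M) : bm_l c (m + m') = bm_l c m + bm_l c m'.
Proof. by case: tensor_bimod => /(_ c m m') []. Qed.

Lemma bimod_actrD c (m m' : M) : bm_r (m + m') c = bm_r m c + bm_r m' c.
Proof. by case: tensor_bimod => /(_ c m m') []. Qed.

Lemma tensor_hom_eq (A : zmodType) (h1 h2 : M -> A) :
  {morph h1 : x y / x + y} -> {morph h2 : x y / x + y} ->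
  (forall a b, h1 (t a b) = h2 (t a b)) -> forall m, h1 m = h2 m.
Proof.
move=> h1D h2D h12; case: tensorM => _ [_ [_ [_ univ]]].
have [|| h [_ h_uniq]] := univ A (fun a b => h1 (t a b)).
- by move=> a b c; rewrite tensor_addl tensor_addr !h1D.
- by move=> a s b Ss; rewrite tensor_balanced.
by move=> m; rewrite (h_uniq h1) ?(h_uniq h2) // => a b; rewrite h12.
Qed.

Variable sigma : R -> R.
Hypothesis sigmaD : {morph sigma : a b / a + b}.
Hypothesis sigmaM : {morph sigma : a b / a * b}.
Hypothesis sigmaSl : forall s b, S s -> sigma (s * b) = s * sigma b.
Hypothesis sigmaSr : forall a s, S s -> sigma (a * s) = sigma a * s.

Lemma tensor_eval :
  exists h : M -> R, [/\ {morph h : x y / x + y},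
    (forall a b, h (t a b) = a * sigma b),
    (forall c m, h (bm_l c m) = c * h m) &
    (forall c m, h (bm_r m c) = h m * sigma c)].
Proof.
case: tensorM => _ [_ [_ [_ univ]]].
have [|| h [[hD ht] _]] := univ R (fun a b => a * sigma b).
- by move=> a b c; rewrite mulrDl sigmaD mulrDr.
- by move=> a s b Ss; rewrite sigmaSl // mulrA.
exists h; split=> // c.
  apply: tensor_hom_eq => [x y|x y|a b]; first by rewrite bimod_actlD hD.
    by rewrite hD mulrDr.
  by rewrite tensor_actl !ht mulrA.
apply: tensor_hom_eq => [x y|x y|a b]; first by rewrite bimod_actrD hD.
  by rewrite hD mulrDl.
by rewrite tensor_actr !ht sigmaM mulrA.
Qed.

Variables (T : R -> R) (n : nat) (x y : 'I_n -> R).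
Hypothesis T_S : forall r, S (T r).
Hypothesis dual_l : forall r, \sum_(i < n) x i * T (y i * r) = r.
Hypothesis dual_r : forall r, \sum_(i < n) T (r * x i) * y i = r.

Definition casimir : M := \sum_(i < n) t (sigma (x i)) (y i).

Lemma casimir_twisted c : bm_r casimir c = bm_l (sigma c) casimir.
Proof.
rewrite /casimir (additive_sum _ _ _ (bimod_actrD c)).
rewrite (additive_sum _ _ _ (bimod_actlD (sigma c))).
transitivity (\sum_(l < n) \sum_(i < n) t (sigma (x i) * T (y i * c * x l)) (y l)).
  rewrite exchange_big; apply: eq_bigr => i _.
  rewrite tensor_actr -{1}[y i * c]dual_r (additive_sum _ _ _ (tensor_addr _)).
  by apply: eq_bigr => l _; rewrite (tensor_balanced _ _ (T_S _)).
apply: eq_bigr => l _; rewrite tensor_actl -sigmaM.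
rewrite -(additive_sum _ _ _ (fun a b => tensor_addl a b (y l))); congr (t _ _).
under eq_bigr do rewrite -(sigmaSr _ (T_S _)) -mulrA.
by rewrite -(additive_sum _ _ _ sigmaD) dual_l.
Qed.

End TensorProduct.

Section Groupoid.
Variable G : groupoid.
Hypothesis G_groupoid : is_groupoid G.

Lemma ginvK (g : G) : ginv (ginv g) = g.
Proof. by case: G_groupoid. Qed.

Lemma gmulA (g h k : G) : gd g = gr h -> gd h = gr k ->
  gmul (gmul g h) k = gmul g (gmul h k).
Proof. by case: G_groupoid => _ _ gA _ _; apply: gA. Qed.

Lemma gd_mul (g h : G) : gd g = gr h -> gd (gmul g h) = gd h.
Proof. by case: G_groupoid => _ _ _ cmp _ /cmp []. Qed.

Lemma gr_mul (g h : G) : gd g = gr h -> gr (gmul g h) = gr g.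
Proof. by case: G_groupoid => _ _ _ cmp _ /cmp []. Qed.

Lemma gmul_gr (g : G) : gmul (gr g) g = g.
Proof. by case: G_groupoid => _ _ _ _ /(_ g) []. Qed.

Lemma gmul_gd (g : G) : gmul g (gd g) = g.
Proof. by case: G_groupoid => _ _ _ _ /(_ g) []. Qed.

Lemma gd_inv (g : G) : gd (ginv g) = gr g.
Proof. by rewrite /gd /gr ginvK. Qed.

Lemma gr_inv (g : G) : gr (ginv g) = gd g.
Proof. by rewrite /gd /gr ginvK. Qed.

Lemma gr_gd (g : G) : gr (gd g) = gd g.
Proof. exact: etrans (gr_mul (gd_inv g)) (gr_inv g). Qed.

Lemma gid_gd (g : G) : gid (gd g).
Proof. by apply/eqP; apply: (gd_mul (gd_inv g)). Qed.

Lemma gid_gr (g : G) : gid (gr g).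
Proof. by rewrite -gd_inv gid_gd. Qed.

Lemma gid_r (e : G) : gid e -> gr e = e.
Proof. by move/eqP=> de; rewrite -{1}de gr_gd de. Qed.

Lemma gid_inv (e : G) : gid e -> ginv e = e.
Proof.
move=> ide; have := gmul_gd (ginv e); rewrite gd_inv (gid_r ide) => <-.
by rewrite -/(gd e); apply/eqP.
Qed.

Lemma gid_invE (g : G) : gid (ginv g) = gid g.
Proof.
apply/idP/idP => idg; last by rewrite gid_inv.
by have := gid_inv idg; rewrite ginvK => ->.
Qed.

Lemma gmul_invK (g h : G) : gd g = gr h -> gmul (ginv g) (gmul g h) = h.
Proof.
by move=> dgh; rewrite -gmulA ?gd_inv // -/(gd g) dgh gmul_gr.
Qed.

Section Action.
Variables (K : comPzRingType) (R : pzRingType) (sc : K -> R -> R).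
Variables (E : G -> R -> Prop) (one : G -> R) (beta : G -> R -> R).
Hypothesis beta_action : unital_action sc E one beta.

Lemma E_gr g x : E g x <-> E (gr g) x.
Proof. by case: beta_action. Qed.

Lemma E_ideal g : is_ideal (E g).
Proof. by case: beta_action => _ [/(_ g) []]. Qed.

Lemma one_in g : E g (one g).
Proof. by case: beta_action => _ [/(_ g) [_ []]]. Qed.

Lemma E_mul1r g x : E g x -> one g * x = x.
Proof. by case: beta_action => _ [/(_ g) [_ [_ /(_ x) H]] _] /H []. Qed.

Lemma E_mulr1 g x : E g x -> x * one g = x.
Proof. by case: beta_action => _ [/(_ g) [_ [_ /(_ x) H]] _] /H []. Qed.

Lemma beta_in g x : E (ginv g) x -> E g (beta g x).
Proof. by case: beta_action => _ [_ [/(_ g) [bE _] _]]; apply: bE. Qed.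

Lemma beta_add g x y : E (ginv g) x -> E (ginv g) y ->
  beta g (x + y) = beta g x + beta g y.
Proof. by case: beta_action => _ [_ [/(_ g) [_ [/(_ x y) H _]] _]] /H H' /H' []. Qed.

Lemma beta_mul g x y : E (ginv g) x -> E (ginv g) y ->
  beta g (x * y) = beta g x * beta g y.
Proof. by case: beta_action => _ [_ [/(_ g) [_ [/(_ x y) H _]] _]] /H H' /H' []. Qed.

Lemma beta_onto g y : E g y -> exists2 x, E (ginv g) x & beta g x = y.
Proof. by case: beta_action => _ [_ [/(_ g) [_ [_ [_ [_ onto]]]] _]]; apply: onto. Qed.

Lemma beta_id e x : gid e -> E e x -> beta e x = x.
Proof. by case: beta_action => _ [_ [_ [bid _]]] /bid; apply. Qed.

Lemma beta_comp g h x : gd g = gr h -> E (ginv h) x ->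
  beta g (beta h x) = beta (gmul g h) x.
Proof. by case: beta_action => _ [_ [_ [_ [bcomp _]]]]; apply: bcomp. Qed.

Lemma E_span x : exists f : G -> R,
  (forall e, gid e -> E e (f e)) /\ x = \sum_(e | gid e) f e.
Proof. by case: beta_action => _ [_ [_ [_ [_ [span _]]]]]. Qed.

Lemma E_indep (f : G -> R) : (forall e, gid e -> E e (f e)) ->
  \sum_(e | gid e) f e = 0 -> forall e, gid e -> f e = 0.
Proof. by case: beta_action => _ [_ [_ [_ [_ [_ indep]]]]]; apply: indep. Qed.

Lemma E_0 g : E g 0. Proof. by case: (E_ideal g). Qed.
Lemma E_add g x y : E g x -> E g y -> E g (x + y).
Proof. by case: (E_ideal g) => _ ED _ _; apply: ED. Qed.
Lemma E_opp g x : E g x -> E g (- x).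
Proof. by case: (E_ideal g) => _ _ EN _; apply: EN. Qed.
Lemma E_mull g a x : E g x -> E g (a * x).
Proof. by case: (E_ideal g) => _ _ _ EM /(EM a) []. Qed.
Lemma E_mulr g a x : E g x -> E g (x * a).
Proof. by case: (E_ideal g) => _ _ _ EM /(EM a) []. Qed.
Lemma E_mulz g x z : E g x -> E g (x *~ z).
Proof.
move=> Ex; have Exn n : E g (x *+ n).
  elim: n => [|n IH]; first by rewrite mulr0n; apply: E_0.
  by rewrite mulrS; apply: E_add.
by case: z => n; [apply: Exn | rewrite NegzE mulrNz; apply/E_opp/Exn].
Qed.

Lemma E_mul_one g x : E g (x * one g). Proof. exact/E_mull/one_in. Qed.
#[local] Hint Resolve one_in E_mul_one : core.

Lemma one_idem g : one g * one g = one g. Proof. exact/E_mulr1/one_in. Qed.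

Lemma one_eq g h : (forall x, E g x <-> E h x) -> one g = one h.
Proof.
move=> Egh; rewrite -{1}(E_mulr1 (proj2 (Egh _) (one_in h))).
by rewrite (E_mul1r (proj1 (Egh _) (one_in g))).
Qed.

Lemma one_gr g : one g = one (gr g). Proof. exact/one_eq/E_gr. Qed.

Lemma E_inv g x : E (ginv g) x <-> E (gd g) x.
Proof. by have := E_gr (ginv g) x; rewrite gr_inv. Qed.

Lemma one_inv g : one (ginv g) = one (gd g). Proof. exact/one_eq/E_inv. Qed.

(* Distinct identities have orthogonal ideals, since R = (+)_e E_e. *)
Lemma E_disjoint e f z : gid e -> gid f -> e != f -> E e z -> E f z -> z = 0.
Proof.
move=> ide idf nef Ez Fz.
pose F k := if k == e then z else if k == f then - z else 0.
have EF k : gid k -> E k (F k).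
  move=> _; rewrite /F; case: eqP => [-> //|_].
  by case: eqP => [->|_]; [apply: E_opp | apply: E_0].
have fe : (f == e) = false by rewrite eq_sym (negbTE nef).
have sumF : \sum_(k | gid k) F k = 0.
  rewrite (bigD1 e) //= (bigD1 f) /=; last by rewrite idf fe.
  rewrite big1 => [|k /andP[/andP[_ ke] kf]]; last by rewrite /F (negbTE ke) (negbTE kf).
  by rewrite /F eqxx fe eqxx addr0 subrr.
by have := E_indep EF sumF ide; rewrite /F eqxx.
Qed.

Lemma one_mul_id e f x : gid e -> gid f -> E f x ->
  one e * x = if e == f then x else 0.
Proof.
move=> ide idf Ex; case: eqP => [->|/eqP nef]; first exact: E_mul1r.
by apply: (E_disjoint ide idf nef); [apply/E_mulr/one_in | apply: E_mull].
Qed.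

Lemma mul_one_id e f x : gid e -> gid f -> E f x ->
  x * one e = if e == f then x else 0.
Proof.
move=> ide idf Ex; case: eqP => [->|/eqP nef]; first exact: E_mulr1.
by apply: (E_disjoint ide idf nef); [apply/E_mull/one_in | apply: E_mulr].
Qed.

Lemma one_component (F : G -> R) e : (forall f, gid f -> E f (F f)) -> gid e ->
  one e * (\sum_(f | gid f) F f) = F e /\ (\sum_(f | gid f) F f) * one e = F e.
Proof.
move=> EF ide; rewrite mulr_sumr mulr_suml !(bigD1 e ide) /=.
rewrite (one_mul_id ide ide (EF e ide)) (mul_one_id ide ide (EF e ide)) eqxx.
rewrite !big1 ?addr0 // => f /andP[idf fe];
  by rewrite ?(one_mul_id ide idf (EF f idf)) ?(mul_one_id ide idf (EF f idf))
             eq_sym (negbTE fe).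
Qed.

Lemma one_central g x : one g * x = x * one g.
Proof.
have [F [EF ->]] := E_span x; rewrite one_gr.
by have [-> ->] := one_component EF (gid_gr g).
Qed.

Lemma sum_one x : \sum_(e | gid e) x * one e = x.
Proof.
have [F [EF ->]] := E_span x.
by apply: eq_bigr => e ide; have [_ ->] := one_component EF ide.
Qed.

Lemma beta_0 g : beta g 0 = 0.
Proof.
apply: (addrI (beta g 0)); rewrite -beta_add ?addr0 //; exact: E_0.
Qed.

Lemma beta_one g : beta g (one (ginv g)) = one g.
Proof.
have [x Ex bx] := beta_onto (one_in g).
have E1 : E g (beta g (one (ginv g))) by apply/beta_in/one_in.
transitivity (beta g (one (ginv g)) * beta g x); first by rewrite bx E_mulr1.
by rewrite -beta_mul ?(E_mul1r Ex) //; apply: one_in.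
Qed.

Definition twist g a := beta g (a * one (ginv g)).

Lemma twist_in g a : E g (twist g a).
Proof. exact/beta_in/E_mul_one. Qed.

#[local] Hint Resolve twist_in : core.

Lemma twistD g : {morph twist g : a b / a + b}.
Proof. by move=> a b; rewrite /twist mulrDl beta_add. Qed.

Lemma twistM g : {morph twist g : a b / a * b}.
Proof.
move=> a b; rewrite /twist -beta_mul //; congr (beta g _).
by rewrite -mulrA -[RHS]mulrA (E_mul1r (E_mul_one _ _)) mulrA.
Qed.

Lemma twist_sum g (I : Type) (r : seq I) (P : pred I) (F : I -> R) :
  twist g (\sum_(i <- r | P i) F i) = \sum_(i <- r | P i) twist g (F i).
Proof. exact/additive_sum/twistD. Qed.

Lemma twist1 g : twist g 1 = one g.
Proof. by rewrite /twist mul1r beta_one. Qed.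

Lemma twist0 g : twist g 0 = 0.
Proof. exact/additive_0/twistD. Qed.

Lemma twist_one_inv g : twist g (one (ginv g)) = one g.
Proof. by rewrite /twist one_idem beta_one. Qed.

Lemma twist_id e a : gid e -> twist e a = a * one e.
Proof. by move=> ide; rewrite /twist gid_inv // beta_id. Qed.

Lemma twist_fixedl g s b : fixed_ring one beta s -> twist g (s * b) = s * twist g b.
Proof. by move=> fs; rewrite twistM [twist g s]fs -mulrA E_mul1r. Qed.

Lemma twist_fixedr g a s : fixed_ring one beta s -> twist g (a * s) = twist g a * s.
Proof.
by move=> fs; rewrite twistM [twist g s]fs -one_central mulrA E_mulr1.
Qed.

Lemma twist_comp m k r :
  twist m (twist k r) = if gd m == gr k then twist (gmul m k) r else 0.
Proof.
have Ek : E (gr k) (twist k r) by apply/(E_gr k).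
rewrite [twist m _]/twist one_inv.
rewrite (mul_one_id (gid_gd m) (gid_gr k) Ek); case: eqP => [dmk|_]; last exact: beta_0.
by rewrite beta_comp // /twist !one_inv (gd_mul dmk).
Qed.

Definition trace r := \sum_(k : G) twist k r.

Lemma trace_fixed r : fixed_ring one beta (trace r).
Proof.
move=> m; rewrite -/(twist m (trace r)) /trace twist_sum mulr_suml.
have Etw k : E (gr k) (twist k r) by apply/(E_gr k).
under eq_bigr do rewrite twist_comp.
under [RHS]eq_bigr => k _ do rewrite one_gr (mul_one_id (gid_gr m) (gid_gr k) (Etw k)).
rewrite -!big_mkcond /= [RHS](reindex_onto (gmul m) (gmul (ginv m))) /=; last first.
  by move=> l /eqP rml; rewrite -{1}[m]ginvK gmul_invK // gd_inv.
apply: eq_big => // k; apply/eqP/andP => [dmk | [/eqP rm /eqP mk]].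
  by rewrite gr_mul // gmul_invK.
by rewrite -mk gr_mul ?gr_inv // gd_inv.
Qed.

Section GaloisCoordinates.
Variables (n : nat) (xs ys : 'I_n -> R).
Hypothesis galois_coords : forall g : G,
  \sum_(i < n) xs i * twist g (ys i) = if gid g then one g else 0.

Lemma galois_coords_r k :
  \sum_(l < n) twist k (xs l) * ys l = if gid k then one k else 0.
Proof.
have := congr1 (twist k) (galois_coords (ginv k)); rewrite gid_invE twist_sum.
under eq_bigr do rewrite twistM twist_comp gr_inv eqxx (twist_id _ (gid_gr k)).
have -> : twist k (if gid k then one (ginv k) else 0) = if gid k then one k else 0.
  by case: ifP; rewrite ?twist_one_inv ?twist0.
move=> <-; apply: eq_bigr => l _.
by rewrite -one_gr -one_central mulrA E_mulr1.
Qed.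

Lemma dual_l r : \sum_(i < n) xs i * trace (ys i * r) = r.
Proof.
rewrite /trace; under eq_bigr do rewrite mulr_sumr.
rewrite exchange_big /= -[RHS]sum_one [RHS]big_mkcond; apply: eq_bigr => k _.
under eq_bigr do rewrite twistM mulrA.
rewrite -mulr_suml galois_coords; case: ifP => idk; last by rewrite mul0r.
by rewrite twist_id // mulrA one_central -mulrA one_idem.
Qed.

Lemma dual_r r : \sum_(l < n) trace (r * xs l) * ys l = r.
Proof.
rewrite /trace; under eq_bigr do rewrite mulr_suml.
rewrite exchange_big /= -[RHS]sum_one [RHS]big_mkcond; apply: eq_bigr => k _.
under eq_bigr do rewrite twistM -mulrA.
rewrite -mulr_sumr galois_coords_r; case: ifP => idk; last by rewrite mulr0.
by rewrite twist_id // -mulrA one_idem.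
Qed.

(* sum_i x_i y_i = 1, so the Casimir element evaluates to 1_g. *)
Lemma galois_sum_xy : \sum_(i < n) xs i * ys i = 1.
Proof.
rewrite -(sum_one 1) -[LHS]sum_one; apply: eq_bigr => e ide.
have := galois_coords e; rewrite ide => coords_e.
rewrite mul1r -[RHS]coords_e mulr_suml.
by apply: eq_bigr => i _; rewrite twist_id // mulrA.
Qed.

End GaloisCoordinates.

Notation J := (Jset E one beta).

Lemma J_mul g h a b : gd g = gr h -> J h a -> J g b -> J (gmul g h) (a * b).
Proof.
move=> dgh [Ea Ja] [Eb Jb]; split.
  by apply/(E_gr (gmul g h)); rewrite gr_mul //; apply/(E_gr g); apply: E_mull.
move=> x; rewrite -/(twist (gmul g h) x).
have := twist_comp g h x; rewrite dgh eqxx => <-.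
by rewrite -mulrA Jb mulrA Ja mulrA.
Qed.

Lemma J_0 g : J g 0.
Proof. by split=> [|x]; [apply: E_0 | rewrite mul0r mulr0]. Qed.

Lemma J_add g a b : J g a -> J g b -> J g (a + b).
Proof.
by move=> [Ea Ja] [Eb Jb]; split=> [|x]; [apply: E_add | rewrite mulrDl mulrDr Ja Jb].
Qed.

Lemma J_mulz g a z : J g a -> J g (a *~ z).
Proof.
by move=> [Ea Ja]; split=> [|x]; [apply: E_mulz | rewrite mulrzAl mulrzAr Ja].
Qed.

Lemma prodgen_J g h x : gd g = gr h -> prodgen (J h) (J g) x -> J (gmul g h) x.
Proof.
move=> dgh [k [a [b [z [Jab ->]]]]].
elim/big_rec: _ => [|i y _ Jy]; first exact: J_0.
by apply: J_add Jy; apply: J_mulz; case: (Jab i) => Ja Jb; apply: J_mul.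
Qed.

Lemma J_gr g x : J (gr g) x <-> E g x /\ (forall y, x * y = y * x).
Proof.
have twist_gr y : twist (gr g) y = y * one g by rewrite twist_id ?gid_gr // -one_gr.
split=> [[Ex Jx] | [Ex Cx]].
  have Egx : E g x by apply/(E_gr g).
  split=> // y; move: (Jx y); rewrite -/(twist _ y) twist_gr => <-.
  by rewrite -one_central mulrA E_mulr1.
split=> [|y]; first by apply/(E_gr g).
by rewrite -/(twist _ y) twist_gr mulrA Cx -mulrA E_mulr1.
Qed.

Lemma J_left_one g u : J g u -> one (ginv g) * u = u.
Proof. by move=> [Eu Ju]; rewrite -Ju -/(twist g _) twist_one_inv E_mulr1. Qed.

Lemma J_inv_of_twisted g w : E (ginv g) w ->
  (forall c, w * c = twist g c * w) -> J (ginv g) w.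
Proof.
move=> Ew wc; split=> // x; rewrite ginvK.
have Exg : E (ginv (ginv g)) (x * one g) by rewrite ginvK.
have Ey := beta_in Exg; rewrite wc /twist (E_mulr1 Ey) beta_comp ?gr_inv //.
have w1 : one g * w = w by rewrite -twist_one_inv -wc E_mulr1.
by rewrite (beta_id (gid_gr g)) -?mulrA ?w1 //; apply/(E_gr g).
Qed.

Hypothesis galois : galois_ext one beta.
Hypothesis hirata : hirata_separable (fixed_ring one beta).

(* The Casimir element q of R (x)_{R^beta} R is written through the         *)
(* Hirata embedding as q = sum_j f(q)_j m_j with central m_j; the sigma_g-  *)
(* twisted evaluation h sends q to 1_g and each m_j into J_g.              *)
Lemma J_unit_decomposition g : exists k (w u : 'I_k -> R),
  (forall j, J (ginv g) (w j) /\ J g (u j)) /\ one g = \sum_(j < k) w j * u j.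
Proof.
case: galois => n [xs [ys coords]].
case: hirata => M [t [tensorM [k [P [Q [f [sP sQ PQ PQ0 [fhom finj fim]]]]]]]].
have [h [hD ht hl hr]] := tensor_eval tensorM (twistD g) (twistM g) (@twist_fixedl g).
pose q := casimir t (twist g) xs ys.
have q_twisted c : bm_r q c = bm_l (twist g c) q.
  exact: (casimir_twisted tensorM (twistD g) (twistM g) (@twist_fixedr g)
            trace_fixed (dual_l coords) (dual_r coords)).
have hq : h q = one g.
  rewrite /q /casimir (additive_sum _ _ _ hD); under eq_bigr do rewrite ht -twistM.
  by rewrite -twist_sum (galois_sum_xy coords) twist1.
have [m [m_central m_span]] := summand_central_basis sP sQ PQ PQ0 fhom finj fim.
have u_J j : J g (h (m j)).
  have M1 : bm_r (m j) 1 = m j by case: (tensor_bimod tensorM) => _ _ _ /(_ (m j)) [].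
  split=> [|x]; first by rewrite -M1 hr twist1.
  by rewrite -hl m_central hr.
have w_twisted j c : f q 0 j * c = twist g c * f q 0 j.
  have := congr1 (fun v : 'rV[R]_k => v 0 j) (congr1 f (q_twisted c)).
  by case: fhom => _ fl fr; rewrite fr fl /= !mxE.
exists k, (fun j => f q 0 j * one (ginv g)), (fun j => h (m j)); split.
  move=> j; split=> //; apply: J_inv_of_twisted => // c.
  by rewrite -mulrA one_central mulrA w_twisted mulrA.
rewrite -hq {1}(m_span q) (additive_sum _ _ _ hD).
by apply: eq_bigr => j _; rewrite hl -mulrA (J_left_one (u_J j)).
Qed.

(* J_h J_g = J_gh: write x = sum_j (x w_j) u_j using the decomposition. *)
Lemma J_product g h : gd g = gr h ->
  forall x, prodgen (J h) (J g) x <-> J (gmul g h) x.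
Proof.
move=> dgh x; split; first exact: prodgen_J.
move=> Jx; have [k [w [u [wuJ one_wu]]]] := J_unit_decomposition g.
exists k, (fun j => x * w j), u, (fun _ => 1); split.
  move=> j; split; last exact: (proj2 (wuJ j)).
  rewrite -[h in J h](gmul_invK dgh); apply: J_mul Jx (proj1 (wuJ j)).
  by rewrite gd_inv gr_mul.
have Exg : E g x by apply/(E_gr g); rewrite -(gr_mul dgh); apply/(E_gr (gmul g h)); case: Jx.
rewrite -{1}(E_mulr1 Exg) one_wu mulr_sumr.
by apply: eq_bigr => j _; rewrite mulr1z mulrA.
Qed.

Lemma J_inv_product g x :
  prodgen (J (ginv g)) (J g) x <-> E g x /\ (forall y, x * y = y * x).
Proof. exact: iff_trans (J_product (esym (gr_inv g)) x) (J_gr g x). Qed.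

(* Some u_j is nonzero when 1_g <> 0. *)
Lemma J_nonzero g : one g <> 0 -> exists x, J g x /\ x <> 0.
Proof.
move=> one_neq0; have [k [w [u [wuJ one_wu]]]] := J_unit_decomposition g.
have [j uj_neq0 | u_eq0] := pickP (fun j => u j != 0).
  by exists (u j); split; [exact: (proj2 (wuJ j)) | apply/eqP].
by case: one_neq0; rewrite one_wu big1 // => j _; move/eqP: (u_eq0 j) => ->; rewrite mulr0.
Qed.

End Action.
End Groupoid.

Theorem lemma3p4 (K : comPzRingType) (R : pzRingType) (sc : K -> R -> R)
    (G : groupoid) (E : G -> R -> Prop) (one : G -> R) (beta : G -> R -> R) :
  is_groupoid G ->
  is_K_algebra sc ->
  unital_action sc E one beta ->
  galois_ext one beta ->
  hirata_separable (fixed_ring one beta) ->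
  [/\ (forall g h : G, gd g = gr h ->
         forall x, prodgen (Jset E one beta h) (Jset E one beta g) x
                   <-> Jset E one beta (gmul g h) x),
      (forall (g : G) x, prodgen (Jset E one beta (ginv g)) (Jset E one beta g) x
                   <-> (E g x /\ forall y, x * y = y * x)) &
      (forall g : G, one g <> 0 -> exists x, Jset E one beta g x /\ x <> 0)].
Proof.
move=> groupoidG _ action galois hirata; split.
- exact (J_product groupoidG action galois hirata).
- exact (J_inv_product groupoidG action galois hirata).
- exact (J_nonzero groupoidG action galois hirata).
Qed.
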